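(* There exists a smallest (for inclusion) shell-complete category of cubes.
   Context: $[0]=\{()\}$, $[n]=\{0,1\}^n$ ($n\ge1$) with the product order; ${\rm PoSet}$ is posets with strictly increasing maps. Face maps $\delta_i^\alpha:[n-1]\to[n]$ insert $\alpha\in\{0,1\}$ at position $i$; $\square$ is the subcategory of ${\rm PoSet}$ with objects $[n]$ generated by face maps. A map $[m]\to[n]$ is adjacency-preserving if strictly increasing and sends pairs at Hamming distance $1$ to pairs at Hamming distance $1$. A category of cubes is a subcategory $\mathcal A\subset{\rm PoSet}$ with objects $\{[n]:n\ge0\}$, containing $\square$, whose morphisms are adjacency-preserving. An $\mathcal A$-set is a presheaf on $\mathcal A$, $\mathcal A[p]=\mathcal A(-,[p])$, and $\mathrm{cosk}_1^{\mathcal A}$ is the right adjoint of the truncation $K\mapsto K_{\le1}$ to presheaves on the full subcategory on $[0],[1]$. $\mathcal A$ is shell-complete if for every $p\ge2$ the canonical map $\mathcal A[p]\to\mathrm{cosk}_1^{\mathcal A}(\mathcal A[p]_{\le1})$ is an isomorphism. *)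

From mathcomp Require Import all_boot.
Set Implicit Arguments. Unset Strict Implicit. Unset Printing Implicit Defensive.

Definition cube (n : nat) := {ffun 'I_n -> bool}.

(* A candidate morphism [m] -> [n]: any map of underlying sets. *)
Definition cmap (m n : nat) := {ffun cube m -> cube n}.

Definition cle n (x y : cube n) : bool := [forall i, x i ==> y i].
Definition clt n (x y : cube n) : bool := cle x y && (x != y).

Definition hdist n (x y : cube n) : nat := #|[set i | x i != y i]|.

Definition strictly_increasing m n (f : cmap m n) : Prop :=
  forall x y, clt x y -> clt (f x) (f y).

Definition adjacency_preserving m n (f : cmap m n) : Prop :=
  strictly_increasing f /\
  forall x y, hdist x y = 1 -> hdist (f x) (f y) = 1.

Definition cid n : cmap n n := [ffun x => x].
Definition ccomp k l n (g : cmap l n) (f : cmap k l) : cmap k n :=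
  [ffun x => g (f x)].

(* Face map delta_i^a : [n] -> [n+1], inserting a at position i (i : 'I_(n+1)). *)
Definition face n (i : 'I_n.+1) (a : bool) : cmap n n.+1 :=
  [ffun x : cube n => [ffun j : 'I_n.+1 =>
      match unlift i j with Some k => x k | None => a end]].

Definition cube_family := forall m n : nat, cmap m n -> Prop.

(* A is a category of cubes: a subcategory of PoSet on the objects [n]
   (closed under identities and composition) containing the box category
   (i.e. containing all face maps, which generate it), all of whose
   morphisms are adjacency-preserving. *)
Definition category_of_cubes (A : cube_family) : Prop :=
  [/\ (forall n, A n n (cid n)),
      (forall k l n (g : cmap l n) (f : cmap k l),
          A l n g -> A k l f -> A k n (ccomp g f)),
      (forall n (i : 'I_n.+1) (a : bool), A n n.+1 (face i a)) &
      (forall m n (f : cmap m n), A m n f -> adjacency_preserving f)].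

(* Morphisms of truncated presheaves A[n]_{<=1} -> A[p]_{<=1}, where A[n] is
   the representable presheaf A(-,[n]): components phi_k for k = 0,1, sending
   A([k],[n]) into A([k],[p]), natural w.r.t. every morphism g : [k] -> [l]
   of A with k,l <= 1.  (Values of phi outside A([k],[n]) are irrelevant.) *)
Definition trunc_transfo (A : cube_family) (n p : nat)
    (phi : forall k, cmap k n -> cmap k p) : Prop :=
  (forall k (x : cmap k n), k <= 1 -> A k n x -> A k p (phi k x)) /\
  (forall k l (g : cmap k l) (x : cmap l n), k <= 1 -> l <= 1 ->
      A k l g -> A l n x -> phi k (ccomp x g) = ccomp (phi l x) g).

(* The canonical map A[p]_n = A([n],[p]) -> cosk_1(A[p]_{<=1})_n
   = Hom(A[n]_{<=1}, A[p]_{<=1}), f |-> (x |-> f o x), is a bijection. *)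
Definition canonical_bijective (A : cube_family) (n p : nat) : Prop :=
  (forall f1 f2 : cmap n p, A n p f1 -> A n p f2 ->
     (forall k (x : cmap k n), k <= 1 -> A k n x -> ccomp f1 x = ccomp f2 x) ->
     f1 = f2) /\
  (forall phi : forall k, cmap k n -> cmap k p, @trunc_transfo A n p phi ->
     exists2 f : cmap n p, A n p f &
       forall k (x : cmap k n), k <= 1 -> A k n x -> phi k x = ccomp f x).

(* Shell-complete: for every p >= 2, A[p] -> cosk_1(A[p]_{<=1}) is an
   isomorphism of A-sets, i.e. bijective in every degree n. *)
Definition shell_complete (A : cube_family) : Prop :=
  forall p, 2 <= p -> forall n, canonical_bijective A n p.

Definition subcategory (A B : cube_family) : Prop :=
  forall m n (f : cmap m n), A m n f -> B m n f.

From mathcomp Require Import all_boot.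
Set Implicit Arguments. Unset Strict Implicit. Unset Printing Implicit Defensive.

(* The smallest shell-complete category of cubes is the one of ALL
   adjacency-preserving maps.  It is shell-complete because a morphism of
   1-truncations is determined by its action on points; the induced map of
   vertices sends edges to edges, hence is adjacency-preserving (strict
   monotonicity only has to be checked on covering pairs).
   Conversely, every category of cubes contains all points [0] -> [n] and all
   adjacency-preserving edges [1] -> [n], as composites of face maps.  A
   strictly increasing map [m] -> [n] has m <= n, so this covers every map into
   [0] or [1]; a map f into [p] with p >= 2 has a 1-truncation (x |-> f o x)
   that is a transformation of truncated presheaves, which by
   shell-completeness is induced by a morphism of the category, necessarily f. *)

Lemma cube0_eq (x y : cube 0) : x = y.
Proof. by apply/ffunP => -[]. Qed.

Definition bit (b : bool) : cube 1 := [ffun => b].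

Lemma cube1E (y : cube 1) : y = bit (y ord0).
Proof. by apply/ffunP => i; rewrite ffunE (ord1 i). Qed.

Lemma cle_trans n (x y z : cube n) : cle x y -> cle y z -> cle x z.
Proof.
move=> /forallP Hxy /forallP Hyz; apply/forallP => i.
by apply/implyP => /(implyP (Hxy i)) /(implyP (Hyz i)).
Qed.

Lemma cle_anti n (x y : cube n) : cle x y -> cle y x -> x = y.
Proof.
move=> /forallP Hxy /forallP Hyx; apply/ffunP => i.
by move: (Hxy i) (Hyx i); case: (x i); case: (y i).
Qed.

Lemma clt_trans n (x y z : cube n) : clt x y -> clt y z -> clt x z.
Proof.
move=> /andP[Hxy nxy] /andP[Hyz _]; rewrite /clt (cle_trans Hxy Hyz).
by apply: contra nxy => /eqP Exz; rewrite -Exz in Hyz; rewrite (cle_anti Hxy Hyz).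
Qed.

Lemma hdistxx n (x : cube n) : hdist x x = 0.
Proof. by apply/eqP; rewrite cards_eq0; apply/eqP/setP => i; rewrite !inE eqxx. Qed.

Lemma hdistC n (x y : cube n) : hdist x y = hdist y x.
Proof. by apply: eq_card => i; rewrite !inE eq_sym. Qed.

Lemma hdist_eq0 n (x y : cube n) : (hdist x y == 0) = (x == y).
Proof.
rewrite cards_eq0; apply/eqP/eqP => [Exy | ->]; last first.
  by apply/setP => i; rewrite !inE eqxx.
by apply/ffunP => i; apply/eqP/negbNE; have := in_set0 i; rewrite -Exy inE => ->.
Qed.

Lemma hdist1_neq n (u v : cube n) : hdist u v = 1 -> u != v.
Proof. by move=> Huv; rewrite -hdist_eq0 Huv. Qed.

Lemma clt_bit : clt (bit false) (bit true).
Proof.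
apply/andP; split; first by apply/forallP => i; rewrite !ffunE.
by apply/eqP => /ffunP/(_ ord0); rewrite !ffunE.
Qed.

Lemma hdist_bit : hdist (bit false) (bit true) = 1.
Proof. by rewrite -[RHS](card_ord 1); apply: eq_card => i; rewrite !inE !ffunE. Qed.

Lemma clt1 (u v : cube 1) : clt u v -> u = bit false /\ v = bit true.
Proof.
case/andP => /forallP/(_ ord0); rewrite (cube1E u) (cube1E v) !ffunE.
by case: (u ord0); case: (v ord0); rewrite ?eqxx.
Qed.

Lemma hdist1P n (u v : cube n) :
  hdist u v = 1 -> exists i, forall k, (u k != v k) = (k == i).
Proof.
by move=> /eqP/cards1P[i Hi]; exists i => k; rewrite -in_set1 -Hi inE.
Qed.

Lemma hdist1_clt n (u v : cube n) : hdist u v = 1 -> clt u v \/ clt v u.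
Proof.
move=> Huv; have [i Hi] := hdist1P Huv.
have Hle (x y : cube n) : x i ==> y i -> (forall k, k != i -> x k = y k) -> cle x y.
  move=> Hxyi Exy; apply/forallP => k.
  by case: (eqVneq k i) => [-> | /Exy ->] //; rewrite implybb.
have Ek k : k != i -> u k = v k by rewrite -Hi => /negbNE/eqP.
have := Hi i; rewrite eqxx; move/hdist1_neq: Huv => Nuv.
case Eui: (u i); case Evi: (v i) => // _.
  by right; rewrite /clt eq_sym Nuv andbT; apply: Hle => [|k /Ek] //; rewrite Eui Evi.
by left; rewrite /clt Nuv andbT; apply: Hle => [|k /Ek] //; rewrite Eui Evi.
Qed.

Definition del n (j : 'I_n.+1) (x : cube n.+1) : cube n := [ffun k => x (lift j k)].

Lemma del_face n (j : 'I_n.+1) a (x : cube n) : del j (face j a x) = x.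
Proof. by apply/ffunP => i; rewrite !ffunE liftK. Qed.

Lemma face_del n (j : 'I_n.+1) (x : cube n.+1) : face j (x j) (del j x) = x.
Proof.
by apply/ffunP => i; rewrite !ffunE; case: unliftP => [k ->|->]; rewrite ?ffunE.
Qed.

Lemma face_pivot n (j : 'I_n.+1) a (x : cube n) : face j a x j = a.
Proof. by rewrite !ffunE unlift_none. Qed.

Lemma cle_del n (j : 'I_n.+1) (x y : cube n.+1) :
  x j = y j -> cle x y = cle (del j x) (del j y).
Proof.
move=> Exyj; apply/forallP/forallP => Hxy i; first by rewrite !ffunE Hxy.
by case: (unliftP j i) => [k ->|->]; [move: (Hxy k); rewrite !ffunE | rewrite Exyj implybb].
Qed.

Lemma hdist_del n (j : 'I_n.+1) (x y : cube n.+1) :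
  x j = y j -> hdist x y = hdist (del j x) (del j y).
Proof.
move=> Exyj; rewrite /hdist -[RHS](card_imset _ (@lift_inj _ j)).
congr #|pred_of_set _|; apply/setP => i; rewrite inE; case: (unliftP j i) => [k ->|->].
  by rewrite mem_imset ?inE ?ffunE //; apply: lift_inj.
rewrite Exyj eqxx; apply/esym/imsetP => -[k _ /eqP].
by rewrite (negbTE (neq_lift _ _)).
Qed.

Lemma adjacency_preserving_face n (j : 'I_n.+1) a : adjacency_preserving (face j a).
Proof.
split=> x y; last by rewrite (@hdist_del _ j) ?face_pivot // !del_face.
case/andP=> Hxy Nxy; rewrite /clt (@cle_del _ j) ?face_pivot // !del_face Hxy.
by apply: contra Nxy => /eqP/(congr1 (del j)); rewrite !del_face => ->.
Qed.

Lemma adjacency_preserving_comp k l n (g : cmap l n) (f : cmap k l) :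
  adjacency_preserving g -> adjacency_preserving f -> adjacency_preserving (ccomp g f).
Proof. by move=> [g1 g2] [f1 f2]; split=> x y Hxy; rewrite !ffunE; auto. Qed.

Definition const_map k n (v : cube n) : cmap k n := [ffun => v].

Definition cube0_pt : cube 0 := [ffun => false].

Lemma point_mapE n (x : cmap 0 n) : x = const_map 0 (x cube0_pt).
Proof. by apply/ffunP => y; rewrite ffunE (cube0_eq y cube0_pt). Qed.

Lemma ccomp_const k l n (x : cmap l n) (y : cube l) :
  ccomp x (const_map k y) = const_map k (x y).
Proof. by apply/ffunP => w; rewrite !ffunE. Qed.

Lemma cmap_eq_on_points m n (f1 f2 : cmap m n) :
  (forall v, ccomp f1 (const_map 0 v) = ccomp f2 (const_map 0 v)) -> f1 = f2.
Proof.
move=> Ef12; apply/ffunP => v; move: (Ef12 v).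
by rewrite !ccomp_const => /ffunP/(_ cube0_pt); rewrite !ffunE.
Qed.

Lemma adjacency_preserving_point n (x : cmap 0 n) : adjacency_preserving x.
Proof.
split=> u v; first by rewrite /clt (cube0_eq u v) eqxx andbF.
by rewrite (cube0_eq u v) hdistxx.
Qed.

Definition edge_map n (u v : cube n) : cmap 1 n :=
  [ffun y : cube 1 => if y ord0 then v else u].

Lemma edge_mapE n (e : cmap 1 n) : e = edge_map (e (bit false)) (e (bit true)).
Proof. by apply/ffunP => y; rewrite ffunE {1}(cube1E y); case: (y ord0). Qed.

Lemma adjacency_preserving_edge n (u v : cube n) :
  clt u v -> hdist u v = 1 -> adjacency_preserving (edge_map u v).
Proof.
move=> Huv Duv; split=> y y'; first by case/clt1 => -> ->; rewrite !ffunE.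
rewrite (cube1E y) (cube1E y') !ffunE.
by case: (y ord0); case: (y' ord0); rewrite ?hdistxx // => _; rewrite // hdistC.
Qed.

Lemma clt_cover_step n (x y : cube n) : clt x y ->
  exists x', [/\ clt x x', hdist x x' = 1, cle x' y & hdist x' y < hdist x y].
Proof.
case/andP=> Hxy Nxy.
have [i Nxyi] : exists i, x i != y i.
  by apply/existsP; apply: contraR Nxy; rewrite negb_exists => /forallP Exy;
    apply/eqP/ffunP => i; apply/eqP/negbNE/Exy.
have [Exi Eyi] : x i = false /\ y i = true.
  by move: (forallP Hxy i) Nxyi; case: (x i); case: (y i).
pose x' : cube n := [ffun k => (k == i) || x k].
have Dxx' : hdist x x' = 1.
  rewrite /hdist -(cards1 i); apply: eq_card => k; rewrite !inE ffunE.
  by case: (eqVneq k i) => [->|] /=; rewrite ?Exi ?eqxx.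
exists x'; split=> //.
- rewrite /clt hdist1_neq // andbT; apply/forallP => k.
  by rewrite ffunE; apply/implyP => ->; rewrite orbT.
- apply/forallP => k; rewrite ffunE; case: (eqVneq k i) => [->|_] /=; first by rewrite Eyi.
  exact: (forallP Hxy k).
- apply: proper_card; apply/properP; split.
    by apply/subsetP => k; rewrite !inE ffunE; case: (eqVneq k i) => [->|].
  by exists i; rewrite !inE ?ffunE ?eqxx ?Exi ?Eyi.
Qed.

Lemma strictly_increasing_covers m n (f : cmap m n) :
  (forall u v, clt u v -> hdist u v = 1 -> clt (f u) (f v)) -> strictly_increasing f.
Proof.
move=> Hcov x y; move: {2}(hdist x y) (leqnn (hdist x y)) => d.
elim: d x y => [|d IH] x y Dxy Hxy.
  by move: Hxy; rewrite leqn0 hdistC hdist_eq0 in Dxy; rewrite (eqP Dxy) /clt eqxx andbF.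
have [x' [Hxx' Dxx' Hx'y Dx'y]] := clt_cover_step Hxy.
have Hfxx' := Hcov _ _ Hxx' Dxx'.
case: (eqVneq x' y) => [<- // | Nx'y].
apply: (clt_trans Hfxx'); apply: IH; last by rewrite /clt Hx'y Nx'y.
by rewrite -ltnS (leq_trans Dx'y Dxy).
Qed.

Definition weight n (x : cube n) : nat := #|[set i | x i]|.

Lemma weight_le n (x : cube n) : weight x <= n.
Proof. by rewrite -[n in _ <= n]card_ord max_card. Qed.

Lemma weight_clt n (x y : cube n) : clt x y -> weight x < weight y.
Proof.
case/andP=> /forallP Hxy Nxy; apply: proper_card; rewrite properEneq.
rewrite (_ : [set i | x i] \subset _) ?andbT; last first.
  by apply/subsetP => i; rewrite !inE; apply/implyP.
apply: contra Nxy => /eqP/setP Exy; apply/eqP/ffunP => i.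
by have := Exy i; rewrite !inE.
Qed.

Definition prefix_cube n (k : nat) : cube n := [ffun i : 'I_n => i < k].

Lemma clt_prefix_cube n k : k < n -> clt (prefix_cube n k) (prefix_cube n k.+1).
Proof.
move=> ltkn; rewrite /clt; apply/andP; split.
  by apply/forallP => i; rewrite !ffunE; apply/implyP => /ltnW.
by apply/eqP => /ffunP/(_ (Ordinal ltkn)); rewrite !ffunE /= ltnn ltnSn.
Qed.

(* [f] sends the maximal chain of prefix cubes of [m] to a chain of strictly
   increasing weights in [n]. *)
Lemma strictly_increasing_dim m n (f : cmap m n) : strictly_increasing f -> m <= n.
Proof.
move=> Hf; suff Hk k : k <= m -> k <= weight (f (prefix_cube m k)).
  exact: leq_trans (Hk m (leqnn m)) (weight_le _).
elim: k => [|k IH] ltkm //; apply: leq_ltn_trans (IH (ltnW ltkm)) _.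
exact/weight_clt/Hf/clt_prefix_cube.
Qed.

Lemma face_comp_edge_map n (j : 'I_n.+1) (u v : cube n.+1) : u j = v j ->
  ccomp (face j (u j)) (edge_map (del j u) (del j v)) = edge_map u v.
Proof.
move=> Euvj; apply/ffunP => y; rewrite ffunE [RHS]ffunE [edge_map _ _ _]ffunE.
by case: (y ord0); [rewrite Euvj |]; apply: face_del.
Qed.

Lemma category_of_cubes_const (B : cube_family) n (v : cube n) :
  category_of_cubes B -> B 0 n (const_map 0 v).
Proof.
case=> Hid Hcomp Hface _; elim: n v => [|n IH] v.
  rewrite (_ : const_map 0 v = cid 0) //.
  by apply/ffunP => y; rewrite !ffunE; apply: cube0_eq.
have -> : const_map 0 v = ccomp (face ord0 (v ord0)) (const_map 0 (del ord0 v)).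
  by apply/ffunP => y; rewrite [LHS]ffunE [RHS]ffunE [const_map 0 _ y]ffunE face_del.
exact: Hcomp.
Qed.

Lemma category_of_cubes_edge (B : cube_family) n (u v : cube n) :
  category_of_cubes B -> clt u v -> hdist u v = 1 -> B 1 n (edge_map u v).
Proof.
move=> HB; case: (HB) => Hid Hcomp Hface _.
elim: n u v => [|n IH] u v Huv Duv.
  by move: Huv; rewrite /clt (cube0_eq u v) eqxx andbF.
have [j Euvj | Nuv] := pickP [pred j | u j == v j].
  move/eqP: Euvj => Euvj; rewrite -(face_comp_edge_map Euvj); apply: Hcomp => //.
  apply: IH; last by rewrite -hdist_del.
  case/andP: Huv => Huv Nuv; rewrite /clt -cle_del // Huv.
  by apply: contra Nuv => /eqP Edel; rewrite -(face_del j u) -(face_del j v) Edel Euvj.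
have n0 : n = 0.
  apply/eqP; rewrite -[n == 0]/(n.+1 == 1) -{1}(card_ord n.+1) -Duv.
  by apply/eqP/eq_card => i; rewrite !inE; move: (Nuv i) => /= ->.
move: u v Huv {Duv Nuv IH} => /=; rewrite n0 => u v /clt1[-> ->].
rewrite (_ : edge_map _ _ = cid 1) //.
by apply/ffunP => y; rewrite !ffunE {2}(cube1E y); case: (y ord0).
Qed.

Lemma category_of_cubes_low_dim (B : cube_family) k n (x : cmap k n) :
  category_of_cubes B -> k <= 1 -> adjacency_preserving x -> B k n x.
Proof.
move=> HB; case: k x => [|[|//]] x _ Hx.
  by rewrite (point_mapE x); apply: category_of_cubes_const.
case: Hx => Hinc Hadj; rewrite (edge_mapE x).
exact: category_of_cubes_edge (Hinc _ _ clt_bit) (Hadj _ _ hdist_bit).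
Qed.

Definition adjacency_cubes : cube_family := fun m n f => adjacency_preserving f.

Lemma category_of_cubes_adjacency : category_of_cubes adjacency_cubes.
Proof.
split=> [n | k l n g f | n i a | //]; last exact: adjacency_preserving_face.
  by split=> x y; rewrite !ffunE.
exact: adjacency_preserving_comp.
Qed.

Section AdjacencyShellComplete.

Variables n p : nat.
Variable phi : forall k, cmap k n -> cmap k p.
Hypothesis Hphi : trunc_transfo adjacency_cubes phi.

Definition transfo_on_points : cmap n p := [ffun v => phi (const_map 0 v) cube0_pt].

Lemma trunc_transfoE k (x : cmap k n) :
  k <= 1 -> adjacency_preserving x -> phi x = ccomp transfo_on_points x.
Proof.
move=> Hk Hx; apply/ffunP => y; rewrite !ffunE.
have := (proj2 Hphi) 0 k (const_map 0 y) x isT Hk (adjacency_preserving_point _) Hx.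
by rewrite !ccomp_const => /ffunP/(_ cube0_pt); rewrite !ffunE => ->.
Qed.

Lemma transfo_on_points_cover (u v : cube n) : clt u v -> hdist u v = 1 ->
  clt (transfo_on_points u) (transfo_on_points v) /\
  hdist (transfo_on_points u) (transfo_on_points v) = 1.
Proof.
move=> Huv Duv; have Hedge := adjacency_preserving_edge Huv Duv.
have [Hinc Hadj] := (proj1 Hphi) 1 _ isT Hedge; rewrite trunc_transfoE // in Hinc Hadj.
by move: (Hinc _ _ clt_bit) (Hadj _ _ hdist_bit); rewrite !ffunE.
Qed.

Lemma adjacency_preserving_transfo_on_points : adjacency_preserving transfo_on_points.
Proof.
split=> [|u v Duv].
  by apply: strictly_increasing_covers => u v Huv Duv; case: (transfo_on_points_cover Huv Duv).
case: (hdist1_clt Duv) => [Huv | Hvu]; first by case: (transfo_on_points_cover Huv Duv).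
by rewrite hdistC in Duv; rewrite hdistC; case: (transfo_on_points_cover Hvu Duv).
Qed.

End AdjacencyShellComplete.

Lemma canonical_bijective_adjacency n p : canonical_bijective adjacency_cubes n p.
Proof.
split=> [f1 f2 _ _ Ef12 | phi Hphi].
  by apply: cmap_eq_on_points => v; apply: Ef12 (adjacency_preserving_point _).
exists (transfo_on_points phi); first exact: adjacency_preserving_transfo_on_points.
exact: trunc_transfoE.
Qed.

Lemma adjacency_cubes_minimal (B : cube_family) :
  category_of_cubes B -> shell_complete B -> subcategory adjacency_cubes B.
Proof.
move=> HB HS m n f Hf; have [_ _ _ HB_adj] := HB.
case: (leqP n 1) => [le_n1 | lt1n].
  have le_m1 := leq_trans (strictly_increasing_dim (proj1 Hf)) le_n1.
  exact: category_of_cubes_low_dim HB le_m1 Hf.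
have Hf_trunc : trunc_transfo B (fun k (x : cmap k m) => ccomp f x).
  split=> [k x Hk Hx | k l g x _ _ _ _]; last by apply/ffunP => w; rewrite !ffunE.
  exact: category_of_cubes_low_dim HB Hk (adjacency_preserving_comp Hf (HB_adj _ _ _ Hx)).
have [f' Hf' Ef] := (HS n lt1n m).2 _ Hf_trunc.
suff -> : f = f' by [].
by apply: cmap_eq_on_points => v; apply: Ef (category_of_cubes_const v HB).
Qed.

Theorem theorem7p8 :
  exists A : cube_family,
    [/\ category_of_cubes A, shell_complete A &
        forall B : cube_family, category_of_cubes B -> shell_complete B ->
          subcategory A B].
Proof.
exists adjacency_cubes; split.
- exact: category_of_cubes_adjacency.
- by move=> p _ n; apply: canonical_bijective_adjacency.
- exact: adjacency_cubes_minimal.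
Qed.
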